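(* For sets of tags $A, B \subseteq T$, the map $\phi_{A\to B} : O_A \to O_B$ is a lattice homomorphism preserving arbitrary meets and joins: for all $O' \subseteq O_A$, (i) $\bigwedge\{\phi_{A\to B}(f) \mid f \in O'\} = \phi_{A\to B}(\bigwedge O')$, and (ii) $\bigvee\{\phi_{A\to B}(f) \mid f\in O'\} = \phi_{A\to B}(\bigvee O')$.
   Context: $T$ is a set of tags and $O$ a set of options. For $T' \subseteq T$, the options lattice $O_{T'}$ consists of all functions $f : T' \to \mathcal{P}(O)$, ordered pointwise by inclusion; the meet $\bigwedge$ of a subset is the pointwise intersection and the join $\bigvee$ is the pointwise union. The map $\phi_{A\to B} : O_A \to O_B$ is defined by $\phi_{A\to B}(f)(t) = f(t)$ if $t \in A\cap B$ and $\phi_{A\to B}(f)(t) = O$ if $t \in B \setminus A$. *)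

From Stdlib Require Import ClassicalEpsilon.

Definition optlat (T O : Type) (A : T -> Prop) : Type :=
  {t : T | A t} -> (O -> Prop).

Definition olmeet {T O : Type} {A : T -> Prop} (S : optlat T O A -> Prop)
  : optlat T O A :=
  fun t o => forall f, S f -> f t o.

Definition oljoin {T O : Type} {A : T -> Prop} (S : optlat T O A -> Prop)
  : optlat T O A :=
  fun t o => exists f, S f /\ f t o.

Definition phi {T O : Type} (A B : T -> Prop) (f : optlat T O A) : optlat T O B :=
  fun t =>
    match excluded_middle_informative (A (proj1_sig t)) with
    | left h => f (exist _ (proj1_sig t) h)
    | right _ => fun _ => True
    end.

Definition phi_img {T O : Type} (A B : T -> Prop) (S : optlat T O A -> Prop)
  : optlat T O B -> Prop :=
  fun g => exists f, S f /\ g = phi A B f.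

From Stdlib Require Import Classical ClassicalEpsilon FunctionalExtensionality PropExtensionality.

(* Meets and joins in O_A and O_B are computed tag by tag, and phi acts tag by
   tag: on a tag of A it returns the old option set, on a tag outside A the
   full set O.  The identity commutes with every meet and join; the constant
   O commutes with every meet and with every nonempty join (the empty join is
   the empty set, which is why the join part needs a witness). *)

Lemma optlat_ext {T O : Type} {A : T -> Prop} (f g : optlat T O A) :
  (forall t o, f t o <-> g t o) -> f = g.
Proof.
  intros fg.
  apply functional_extensionality; intros t.
  apply functional_extensionality; intros o.
  apply propositional_extensionality, fg.
Qed.

Section Phi.

Variables (T O : Type) (A B : T -> Prop).

Lemma phi_in (f : optlat T O A) (t : {t : T | B t}) (h : A (proj1_sig t)) :
  phi A B f t = f (exist _ (proj1_sig t) h).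
Proof.
  unfold phi; destruct (excluded_middle_informative _) as [h' | h'].
  - now rewrite (proof_irrelevance _ h' h).
  - contradiction.
Qed.

Lemma phi_out (f : optlat T O A) (t : {t : T | B t}) (o : O) :
  ~ A (proj1_sig t) -> phi A B f t o.
Proof.
  intros h; unfold phi; destruct (excluded_middle_informative _); [contradiction | exact I].
Qed.

Lemma olmeet_phi_img (S : optlat T O A -> Prop) t o :
  olmeet (phi_img A B S) t o <-> forall f, S f -> phi A B f t o.
Proof.
  split.
  - intros H f Sf; apply H; now exists f.
  - intros H g [f [Sf ->]]; auto.
Qed.

Lemma oljoin_phi_img (S : optlat T O A -> Prop) t o :
  oljoin (phi_img A B S) t o <-> exists f, S f /\ phi A B f t o.
Proof.
  split.
  - intros [g [[f [Sf ->]] H]]; now exists f.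
  - intros [f [Sf H]]; exists (phi A B f); split; [now exists f | exact H].
Qed.

Lemma phi_olmeet (S : optlat T O A -> Prop) t o :
  olmeet (phi_img A B S) t o <-> phi A B (olmeet S) t o.
Proof.
  rewrite olmeet_phi_img.
  destruct (classic (A (proj1_sig t))) as [h | h].
  - rewrite (phi_in _ t h).
    split; intros H f Sf; specialize (H f Sf); now rewrite (phi_in f t h) in *.
  - split; intros; now apply phi_out.
Qed.

Lemma phi_oljoin (S : optlat T O A -> Prop) t o :
  (exists f, S f) ->
  (oljoin (phi_img A B S) t o <-> phi A B (oljoin S) t o).
Proof.
  intros [f0 Sf0]; rewrite oljoin_phi_img.
  destruct (classic (A (proj1_sig t))) as [h | h].
  - rewrite (phi_in _ t h).
    split; intros [f [Sf H]]; exists f; now rewrite (phi_in f t h) in *.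
  - split; intros _; [now apply phi_out |].
    exists f0; split; [exact Sf0 | now apply phi_out].
Qed.

End Phi.

Theorem theorem4 (T O : Type) (A B : T -> Prop) (S : optlat T O A -> Prop) :
  olmeet (phi_img A B S) = phi A B (olmeet S) /\
  ((exists f, S f) -> oljoin (phi_img A B S) = phi A B (oljoin S)).
Proof.
  split.
  - apply optlat_ext; intros t o; apply phi_olmeet.
  - intros nonempty; apply optlat_ext; intros t o; now apply phi_oljoin.
Qed.
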